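(* Let $m\in[0..\frac n2-1]$. Let $x$ be a random bit string in $\{0,1\}^n$ such that $x_i=1$ for all $i\in[1..2m+2]$ and the bits $x_i$, $i\in[2m+3..n]$, are independent and uniformly distributed in $\{0,1\}$. Then for any $\delta\in[0,2]$, $E[\mathrm{HLB}_\delta(x)]\le 2m+4$.
   Context: Let $n$ be an even positive integer. For $x\in\{0,1\}^n$ consider the blocks $(x_{2\ell+1},x_{2\ell+2})$, $\ell=0,\dots,\frac n2-1$. If $x\neq(1,\dots,1)$, let $m$ be the smallest $\ell$ with $x_{2\ell+1}\neq 1$ or $x_{2\ell+2}\neq 1$, and define $\mathrm{DLB}(x)=2m+1$ if $x_{2m+1}+x_{2m+2}=0$ and $\mathrm{DLB}(x)=2m$ if $x_{2m+1}+x_{2m+2}=1$; set $\mathrm{DLB}(1,\dots,1)=n$. For a real parameter $\delta$, $\mathrm{HLB}_\delta(x)=2m$ if $\mathrm{DLB}(x)=2m+1$, $\mathrm{HLB}_\delta(x)=2m+2-\delta$ if $\mathrm{DLB}(x)=2m$ (for $m\in\{0,\dots,\frac n2-1\}$), and $\mathrm{HLB}_\delta(x)=n$ if $\mathrm{DLB}(x)=n$. *)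

(* Bit strings x in {0,1}^n are n.-tuples of bools; the
   paper's 1-based bit x_{i} is (nth false x (i-1)) here. *)
From HB Require Import structures.
From mathcomp Require Import all_boot all_order all_algebra.
Set Implicit Arguments. Unset Strict Implicit. Unset Printing Implicit Defensive.
Import Order.TTheory GRing.Theory Num.Theory.
Local Open Scope ring_scope.

Definition bit n (x : n.-tuple bool) (i : nat) : bool := nth false x i.

Definition block_not_ones n (x : n.-tuple bool) (l : nat) : bool :=
  ~~ (bit x l.*2 && bit x l.*2.+1).

Definition first_block n (x : n.-tuple bool) : nat :=
  find (block_not_ones x) (iota 0 n./2).

Definition DLB n (x : n.-tuple bool) : nat :=
  let m := first_block x in
  if m == n./2 then n
  else if (bit x m.*2 + bit x m.*2.+1 == 0)%N then m.*2.+1 else m.*2.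

Definition HLB {R : realFieldType} (delta : R) n (x : n.-tuple bool) : R :=
  let d := DLB x in
  if d == n then n%:R
  else if odd d then (d.-1)%:R
  else (d.+2)%:R - delta.

(* Expectation of HLB_delta(x) when x_1..x_{2m+2} = 1 and the remaining
   n-2m-2 bits are independent uniform: uniform average over all such x. *)
Definition E_HLB {R : realFieldType} (delta : R) (n m : nat) : R :=
  (\sum_(x : n.-tuple bool | [forall i : 'I_n, (i < m.*2.+2)%N ==> bit x i])
     HLB delta x) / (2 ^ (n - m.*2.+2))%:R.

(* Write the string as 2m+2 ones followed by k further blocks. The blocks of
   ones only shift HLB by 2m+2, and what remains is the value G_k(y) of HLB
   read on the k free blocks y alone (hlb_blocks k y). Conditioning on the first free block, which is
   (1,1), (0,0) or mixed with probabilities 1/4, 1/4, 1/2, gives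
   E[G_(k+1)] = (2 + E[G_k]) / 4 + 2 (2 - delta) / 4 <= (6 + E[G_k]) / 4,
   so E[G_k] <= 2 for every k as soon as delta >= 0. *)
From HB Require Import structures.
From mathcomp Require Import all_boot all_order all_algebra.
From mathcomp Require Import lra.
Set Implicit Arguments.
Unset Strict Implicit.
Unset Printing Implicit Defensive.
Import Order.TTheory GRing.Theory Num.Theory.
Local Open Scope ring_scope.

Definition pair_not_ones (s : seq bool) (l : nat) : bool :=
  ~~ (nth false s l.*2 && nth false s l.*2.+1).

Definition first_pair (s : seq bool) (k : nat) : nat :=
  find (pair_not_ones s) (iota 0 k).

Lemma first_pair_le s k : (first_pair s k <= k)%N.
Proof. by rewrite /first_pair -[X in (_ <= X)%N](size_iota 0 k) find_size. Qed.

Lemma first_pairS s k :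
  first_pair s k.+1 =
  if pair_not_ones s 0 then 0%N else (first_pair (drop 2 s) k).+1.
Proof.
rewrite /first_pair /= -[iota 1 k]/(iota (1 + 0) k) iotaDl find_map.
case: ifP => // _; congr _.+1; apply: eq_find => l.
by rewrite /pair_not_ones /= !nth_drop.
Qed.

Lemma sum_tuple_cons (R : nmodType) N (F : seq bool -> R) :
  \sum_(x : N.+1.-tuple bool) F x =
  \sum_(t : N.-tuple bool) (F (true :: t) + F (false :: t)).
Proof.
rewrite (reindex (fun p : bool * N.-tuple bool => cons_tuple p.1 p.2)) /=.
  rewrite -(pair_bigA _ (fun b (t : N.-tuple bool) => F (b :: t))) /=.
  by rewrite big_bool /= big_split.
apply: onW_bij; exists (fun x : N.+1.-tuple bool => (thead x, [tuple of behead x])).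
  by case=> b t; congr pair; apply: val_inj.
by move=> x; case: x / tupleP => b t; apply: val_inj.
Qed.

Lemma sum_prefix_ones (R : nmodType) c N (F : (c + N).-tuple bool -> R) :
  \sum_(x : (c + N).-tuple bool | [forall i : 'I_(c + N), (i < c)%N ==> bit x i])
    F x =
  \sum_(t : N.-tuple bool) F (cat_tuple (nseq_tuple c true) t).
Proof.
set t0 := nseq_tuple N false.
rewrite (reindex_onto (fun t => cat_tuple (nseq_tuple c true) t)
                      (fun x => insubd t0 (drop c x))) /=; last first.
  move=> x /forallP prefix_x; apply: val_inj => /=.
  rewrite insubdK ?unfold_in /= ?size_drop ?size_tuple ?addKn //.
  rewrite -[RHS](cat_take_drop c x); congr (_ ++ _).
  apply: (@eq_from_nth _ false).
    by rewrite size_nseq size_takel ?size_tuple ?leq_addr.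
  move=> i; rewrite size_nseq => lt_ic.
  rewrite nth_nseq lt_ic nth_take //.
  by have := prefix_x (Ordinal (leq_trans lt_ic (leq_addr N c))); rewrite /= lt_ic.
apply: eq_bigl => t; apply/andP; split.
  apply/forallP => i; apply/implyP => lt_ic.
  by rewrite /bit /= nth_cat size_nseq lt_ic nth_nseq lt_ic.
apply/eqP/val_inj.
by rewrite /= insubdK drop_size_cat ?size_nseq // unfold_in /= size_tuple.
Qed.

Section HLBOnBlocks.

Variables (R : realFieldType) (delta : R).

Fixpoint hlb_blocks (k : nat) (s : seq bool) : R :=
  if k is k'.+1 then
    let a := nth false s 0 in
    let b := nth false s 1 in
    if a && b then 2 + hlb_blocks k' (drop 2 s)
    else if a || b then 2 - delta else 0
  else 0.

Lemma hlb_blocksS k a b t :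
  hlb_blocks k.+1 [:: a, b & t] =
  if a && b then 2 + hlb_blocks k t else if a || b then 2 - delta else 0.
Proof. by rewrite /= drop0. Qed.

Lemma hlb_blocksE k s :
  hlb_blocks k s =
  let j := first_pair s k in
  if j == k then (k.*2)%:R
  else if (nth false s j.*2 + nth false s j.*2.+1 == 0)%N then (j.*2)%:R
  else (j.*2.+2)%:R - delta.
Proof.
elim: k s => [|k IHk] s //=.
rewrite first_pairS /pair_not_ones.
case Ea: (nth false s 0); case Eb: (nth false s 1) => /=;
  rewrite ?double0 ?Ea ?Eb ?mulr0n //.
rewrite IHk /= eqSS !doubleS !nth_drop !add2n.
by do 2?case: ifP => _; rewrite !mulrS; lra.
Qed.

Lemma HLB_hlb_blocks n (x : n.-tuple bool) :
  ~~ odd n -> HLB delta x = hlb_blocks n./2 x.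
Proof.
move=> even_n; rewrite hlb_blocksE /HLB /DLB /first_block.
rewrite -[find _ _]/(first_pair x n./2) /bit.
have := first_pair_le x n./2.
set j := first_pair x n./2 => le_j.
have [_ | ne_j] := eqVneq j n./2; first by rewrite eqxx even_halfK.
have lt_j2 : (j.*2.+1 < n)%N.
  by rewrite -[X in (_ < X)%N](even_halfK even_n) -doubleS leq_double ltn_neqAle ne_j.
case: (_ + _ == 0)%N.
  by rewrite (ltn_eqF lt_j2) /= odd_double.
by rewrite (ltn_eqF (ltnW lt_j2)) odd_double.
Qed.

Lemma hlb_blocks_nseq_cat c k y :
  hlb_blocks (c + k) (nseq c.*2 true ++ y) = (c.*2)%:R + hlb_blocks k y.
Proof.
elim: c => [|c IHc]; first by rewrite add0r.
rewrite addSn /= drop0 IHc doubleS !mulrS; lra.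
Qed.

Lemma sum_hlb_blocks_le k :
  0 <= delta -> \sum_(t : (k.*2).-tuple bool) hlb_blocks k t <= 2 * (2 ^ k.*2)%:R.
Proof.
move=> delta_ge0; elim: k => [|k IHk]; first by rewrite big1 ?mulr1.
rewrite sum_tuple_cons (sum_tuple_cons _ (fun s =>
  hlb_blocks k.+1 (true :: s) + hlb_blocks k.+1 (false :: s))).
rewrite (eq_bigr (fun t : (k.*2).-tuple bool => 6 - delta * 2 + hlb_blocks k t));
  last by move=> t _; rewrite !hlb_blocksS /=; lra.
rewrite big_split /= sumr_const card_tuple card_bool -[_ *+ 2 ^ _]mulr_natr.
have -> : (2 ^ k.+1.*2)%:R = 4 * (2 ^ k.*2)%:R :> R.
  by rewrite doubleS !expnS mulnA natrM.
have pow_ge0 : 0 <= (2 ^ k.*2)%:R :> R by [].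
nra.
Qed.

End HLBOnBlocks.

Theorem lemma6 (R : realFieldType) (n m : nat) (delta : R) :
  (0 < n)%N -> ~~ odd n -> (m < n./2)%N ->
  0 <= delta -> delta <= 2 ->
  E_HLB delta n m <= (m.*2 + 4)%:R.
Proof.
move=> _ even_n lt_m delta_ge0 _.
have [k def_n] : exists k, n = (m.*2.+2 + k.*2)%N.
  exists (n./2 - m.+1)%N.
  by rewrite -doubleS -doubleD subnKC ?even_halfK.
subst n.
have half_n : ((m.*2.+2 + k.*2)./2 = m.+1 + k)%N by rewrite -doubleS -doubleD doubleK.
rewrite /E_HLB sum_prefix_ones addKn.
under eq_bigr => t _ do
  rewrite (HLB_hlb_blocks delta _ even_n) half_n hlb_blocks_nseq_cat.
rewrite big_split /= sumr_const card_tuple card_bool -[_ *+ 2 ^ _]mulr_natr.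
have pow_gt0 : 0 < (2 ^ k.*2)%:R :> R by rewrite ltr0n expn_gt0.
have := sum_hlb_blocks_le k delta_ge0.
have -> : (m.*2 + 4 = m.+1.*2 + 2)%N by rewrite doubleS !addnS !addn0.
rewrite ler_pdivrMr // natrD; nra.
Qed.
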